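(* Assume, in addition to the setting described in the context (conditions (A1), (A2), (A3), (A6) and (B1)), the following: (B2) Comparability: every state in any multiple-product of the state spaces under consideration (i.e. products of copies of $\Gamma$, $\Gamma_0$, and more generally of non-extensive spaces $\Gamma_1,\dots,\Gamma_n$ of the same kind as $\Gamma$) is adiabatically comparable to every other state in the same multiple-product space. Then $S_-=S_+$, and this common function, denoted $S$, is an entropy on $\Gamma$ in the sense that for $X,Y\in\Gamma$, $X\prec Y$ if and only if $S(X)\leq S(Y)$. A change of the reference states $Z_0$ or $X_1$ amounts to a change of $S$ by an additive constant. The entropy is additive in the sense that the function defined by $S(X,Y)=S(X)+S(Y)$, with $X,Y\in\Gamma$, is an entropy on $\Gamma\times \Gamma$, and likewise $S(X,Z)=S(X)+S(Z)$ with $X\in\Gamma$, $Z\in\Gamma_0$, is an entropy on $\Gamma\times\Gamma_0$. More generally, the entropy is additive on a product of such systems $\Gamma_1\times \Gamma_2 \times \dots \times \Gamma_n$, in the sense that $S(X_1)+S(X_2) + \cdots +S(X_n)$ is an entropy on this space. Finally, the entropy is determined uniquely by these properties, up to an arbitrary additive constant. Its unit of entropy is that of $\Gamma_0$.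
   Context: $X\prec Y$ means state $Y$ can be reached from state $X$ by an adiabatic process; $X\prec\prec Y$ means $X\prec Y$ but not $Y\prec X$; $X\sim_A Y$ (adiabatic equivalence) means $X\prec Y$ and $Y\prec X$; $X,Y$ are comparable if $X\prec Y$ or $Y\prec X$. States of a product space $\Gamma_1\times\Gamma_2$ are pairs $(X_1,X_2)$; $\lambda X$ denotes a scaled copy. A cancellation law is assumed: if $(X_1,X_2)\prec(X_1,Y_2)$ then $X_2\prec Y_2$. The entropy meter $\Gamma_0$ is a normal state space of equilibrium states: there is an essentially unique additive and extensive entropy function $S$ on $\Gamma_0$ (and its scaled products) characterizing $\prec$ there, and the range of $S$ is connected (if $S(X)<S(Y)$ then every value in $[S(X),S(Y)]$ is attained by some $Z\in\Gamma_0$). The relation $\prec$ is also defined on another state space $\Gamma$ (on which scaling need not be defined) and on $\Gamma\times\Gamma_0$, satisfying: (A1) reflexivity $X\sim_A X$; (A2) transitivity; (A3) consistency: $X\prec X'$ and $Y\prec Y'$ imply $(X,Y)\prec(X',Y')$; (A6) stability with respect to $\Gamma_0$: if $(X,\varepsilon Z_0)\prec(Y,\varepsilon Z_1)$ with $Z_0,Z_1\in\Gamma_0$ for a sequence of $\varepsilon\to0$, then $X\prec Y$. Reference states $Z_0\in\Gamma_0$ and $X_1\in\Gamma$ are fixed, and it is assumed (B1): for every $X\in\Gamma$ there are $Z',Z''\in\Gamma_0$ with $(X_1,Z')\prec(X,Z_0)\prec(X_1,Z'')$. Then one defines on $\Gamma$ $S_-(X)=\sup\{S(Z') : Z'\in\Gamma_0,\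 (X_1,Z')\prec(X,Z_0)\}$ and $S_+(X)=\inf\{S(Z'') : Z''\in\Gamma_0,\ (X,Z_0)\prec(X_1,Z'')\}$. *)

From mathcomp Require Import all_boot all_order all_algebra.
From mathcomp Require Import boolp classical_sets reals.
Set Implicit Arguments. Unset Strict Implicit. Unset Printing Implicit Defensive.
Import Order.TTheory GRing.Theory Num.Theory.
Local Open Scope ring_scope.
Local Open Scope classical_set_scope.

Section EntropyMeters.
Context {R : realType}.

Record pos := Pos { posval :> R; posP : 0 < posval }.
Definition pos1 : pos := @Pos 1 ltr01.

Context {I : Type}.
(* Syntax of compound systems: non-extensive spaces Gamma_i (i : I), scaled
   copies Gamma_0^(t) of the entropy meter, and (binary) products. *)
Inductive sys := Base of I | Meter of pos | Prod of sys & sys.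

Context (G : I -> Type) (G0 : Type).

(* states of a compound system; a state of Meter t is t*Z with Z : G0 *)
Fixpoint state (s : sys) : Type :=
  match s with
  | Base i => G i
  | Meter _ => G0
  | Prod s1 s2 => (state s1 * state s2)%type
  end.

Definition pstate := {s : sys & state s}.
Definition pst (s : sys) (x : state s) : pstate := existT state s x.
Definition base (i : I) (x : G i) : pstate := existT state (Base i) x.
Definition meter (t : pos) (z : G0) : pstate := existT state (Meter t) z.
Definition ppair (p q : pstate) : pstate :=
  existT state (Prod (projT1 p) (projT1 q)) (projT2 p, projT2 q).

Fixpoint pure (s : sys) : bool :=
  match s with Base _ => false | Meter _ => true | Prod s1 s2 => pure s1 && pure s2 end.
Fixpoint mass (s : sys) : R :=
  match s with Base _ => 0 | Meter t => posval t | Prod s1 s2 => mass s1 + mass s2 end.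
Fixpoint plain (s : sys) : Prop :=
  match s with Base _ => True | Meter t => posval t = 1 | Prod s1 s2 => plain s1 /\ plain s2 end.

Context (S0 : G0 -> R).

Fixpoint ent0 (s : sys) : state s -> R :=
  match s return state s -> R with
  | Base _ => fun _ => 0
  | Meter t => fun z => posval t * S0 z
  | Prod s1 s2 => fun x => ent0 x.1 + ent0 x.2
  end.

Fixpoint totS (S : forall i, G i -> R) (s : sys) : state s -> R :=
  match s return state s -> R with
  | Base i => fun x => S i x
  | Meter t => fun z => posval t * S0 z
  | Prod s1 s2 => fun x => totS S x.1 + totS S x.2
  end.

Context (prec : pstate -> pstate -> Prop).

Definition adeq (p q : pstate) := prec p q /\ prec q p.

Definition A1_reflexivity := forall p, prec p p.
Definition A2_transitivity := forall p q r, prec p q -> prec q r -> prec p r.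
Definition A3_consistency :=
  forall p p' q q', prec p p' -> prec q q' -> prec (ppair p q) (ppair p' q').
Definition A6_stability :=
  forall (p q : pstate) (z0 z1 : G0),
    (forall d : R, 0 < d -> exists e : pos,
        posval e < d /\ prec (ppair p (meter e z0)) (ppair q (meter e z1))) ->
    prec p q.
Definition cancellation_law :=
  forall p q r, prec (ppair p q) (ppair p r) -> prec q r.
Definition product_identifications :=
  forall p q r, adeq (ppair p (ppair q r)) (ppair (ppair p q) r) /\
                adeq (ppair p q) (ppair q p).
(* Gamma_0 is normal: S0 is an additive and extensive entropy on Gamma_0 and
   its scaled products (compared at equal total mass) *)
Definition meter_entropy :=
  forall p q : pstate, pure (projT1 p) -> pure (projT1 q) ->
    mass (projT1 p) = mass (projT1 q) ->
    (prec p q <-> ent0 (projT2 p) <= ent0 (projT2 q)).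
Definition meter_range_connected :=
  forall z1 z2 : G0, S0 z1 < S0 z2 ->
    forall v : R, S0 z1 <= v <= S0 z2 -> exists z, S0 z = v.
Definition B2_comparability :=
  forall (s : sys) (x y : state s), prec (pst x) (pst y) \/ prec (pst y) (pst x).
Definition B1 (i : I) (z0 : G0) (x1 : G i) :=
  forall x : G i, exists z' z'' : G0,
    prec (ppair (base x1) (meter pos1 z')) (ppair (base x) (meter pos1 z0)) /\
    prec (ppair (base x) (meter pos1 z0)) (ppair (base x1) (meter pos1 z'')).

Definition Sminus (i : I) (z0 : G0) (x1 : G i) (x : G i) : R :=
  sup [set v | exists z : G0,
        prec (ppair (base x1) (meter pos1 z)) (ppair (base x) (meter pos1 z0)) /\ S0 z = v].
Definition Splus (i : I) (z0 : G0) (x1 : G i) (x : G i) : R :=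
  inf [set v | exists z : G0,
        prec (ppair (base x) (meter pos1 z0)) (ppair (base x1) (meter pos1 z)) /\ S0 z = v].

Definition is_entropy_on (s : sys) (F : state s -> R) :=
  forall x y : state s, prec (pst x) (pst y) <-> F x <= F y.

End EntropyMeters.

From mathcomp Require Import all_boot all_order all_algebra.
From mathcomp Require Import boolp classical_sets reals.
From mathcomp Require Import lra.
Import Order.TTheory GRing.Theory Num.Theory.
Local Open Scope ring_scope.
Set Implicit Arguments. Unset Strict Implicit.

(* Each state x is calibrated against the entropy meter: (x, Z0) is
   adiabatically equivalent to (X1, Zx) for a meter state Zx with
   S0 Zx = S_-(x).  Comparability forces S_-(x) = S_+(x), since a meter value
   strictly between them would give a state (X1, Z) comparable to (x, Z0) in
   neither direction; stability (A6), applied to meter states approaching the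
   supremum and the infimum, then shows that this common value is attained.
   Calibrations combine over products, and a calibrated function is an
   entropy: by consistency and cancellation, comparing two calibrated states
   amounts to comparing their meter states, where S0 decides. *)

Section Entropy.
Variables (R : realType) (I : Type) (G : I -> Type) (G0 : Type)
  (prec : @pstate R I G G0 -> @pstate R I G G0 -> Prop) (S0 : G0 -> R).
Hypotheses (hA1 : A1_reflexivity prec) (hA2 : A2_transitivity prec)
  (hA3 : A3_consistency prec) (hA6 : A6_stability prec)
  (hcanc : cancellation_law prec) (hprod : product_identifications prec)
  (hmeter : meter_entropy S0 prec) (hconn : meter_range_connected S0)
  (hB2 : B2_comparability prec).

Local Notation PS := (@pstate R I G G0).
Local Notation pp := (@ppair R I G G0).
Local Notation state := (state G G0).
Local Notation meter1 := (@meter R I G G0 pos1).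
Local Notation adeq := (adeq prec).

Lemma adeq_refl p : adeq p p. Proof. by split; apply: hA1. Qed.

Lemma adeq_sym p q : adeq p q -> adeq q p. Proof. by case. Qed.

Lemma adeq_trans p q r : adeq p q -> adeq q r -> adeq p r.
Proof. by case=> pq qp [qr rq]; split; [apply: hA2 qr | apply: hA2 qp]. Qed.

Lemma adeq_ppair p p' q q' : adeq p p' -> adeq q q' -> adeq (pp p q) (pp p' q').
Proof. by case=> pp' p'p [qq' q'q]; split; apply: hA3. Qed.

Lemma prec_adeq p p' q q' : adeq p p' -> adeq q q' -> prec p q -> prec p' q'.
Proof. by case=> _ p'p [qq' _] pq; apply: hA2 p'p (hA2 pq qq'). Qed.

Lemma adeq_assoc p q r : adeq (pp p (pp q r)) (pp (pp p q) r).
Proof. exact: (hprod p q r).1. Qed.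

Lemma adeq_comm p q : adeq (pp p q) (pp q p).
Proof. exact: (hprod p q p).2. Qed.

Lemma adeq_interchange a b c d : adeq (pp (pp a b) (pp c d)) (pp (pp a c) (pp b d)).
Proof.
apply: adeq_trans (adeq_sym (adeq_assoc _ _ _)) _.
apply: adeq_trans (adeq_ppair (adeq_refl a) (adeq_assoc _ _ _)) _.
apply: adeq_trans (adeq_ppair (adeq_refl a) (adeq_ppair (adeq_comm b c) (adeq_refl d))) _.
apply: adeq_trans (adeq_ppair (adeq_refl a) (adeq_sym (adeq_assoc _ _ _))) _.
exact: adeq_assoc.
Qed.

Lemma prec_ppairl p q r : prec q r -> prec (pp p q) (pp p r).
Proof. exact: hA3. Qed.

Lemma prec_ppairr p q r : prec q r -> prec (pp q p) (pp r p).
Proof. by move=> /hA3; apply. Qed.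

Lemma cancellation_r p q r : prec (pp q p) (pp r p) -> prec q r.
Proof. by move=> /(prec_adeq (adeq_comm _ _) (adeq_comm _ _)) /hcanc. Qed.

Lemma prec_pureE (s : sys) (x y : state s) : pure s ->
  prec (pst x) (pst y) <-> ent0 S0 x <= ent0 S0 y.
Proof. by move=> hs; exact: (@hmeter (pst x) (pst y) hs hs erefl). Qed.

Lemma prec_meter1E a b : prec (meter1 a) (meter1 b) <-> S0 a <= S0 b.
Proof. by have := prec_pureE (s := Meter pos1) a b erefl; rewrite /= !mul1r. Qed.

Lemma prec_meter_pair (t : @pos R) (a b c d : G0) :
  S0 a + posval t * S0 b <= S0 c + posval t * S0 d ->
  prec (pp (meter1 a) (meter G t b)) (pp (meter1 c) (meter G t d)).
Proof.
by have := prec_pureE (s := Prod (Meter pos1) (Meter t)) (a, b) (c, d) erefl;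
  rewrite /= !mul1r => ->.
Qed.

Lemma meter_value_between za zb v : S0 za <= v <= S0 zb -> exists z, S0 z = v.
Proof.
case/andP=> le_av le_vb; have [<-|ne_av] := eqVneq (S0 za) v; first by exists za.
apply: (hconn (z1 := za) (z2 := zb)); last by apply/andP.
by apply: lt_le_trans le_vb; rewrite lt_neqAle ne_av.
Qed.

(* Stability upgrades meter states approaching S0 zx from above (resp. below) to zx
   itself: the defect is absorbed by the small extra copy e * Gamma_0 in (A6). *)
Lemma prec_meter_inf (p q : PS) zx zb : S0 zx <= S0 zb -> prec p (pp q (meter1 zb)) ->
  (forall eps, 0 < eps -> exists z, prec p (pp q (meter1 z)) /\ S0 z < S0 zx + eps) ->
  prec p (pp q (meter1 zx)).
Proof.
move=> le_xb pb approx; have [eq_bx|ne_bx] := eqVneq (S0 zb) (S0 zx).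
  by apply: hA2 pb _; apply/prec_ppairl/prec_meter1E; rewrite eq_bx.
have gap : 0 < S0 zb - S0 zx by rewrite subr_gt0 lt_neqAle eq_sym ne_bx.
apply: (hA6 (z0 := zx) (z1 := zb)) => d d_gt0.
have e_gt0 : 0 < d / 2 by lra.
exists (Pos e_gt0); split; first by rewrite /=; lra.
have [z [pz lt_z]] := approx _ (mulr_gt0 e_gt0 gap).
apply: hA2 (prec_ppairr _ pz) _.
apply: hA2 (adeq_sym (adeq_assoc _ _ _)).1 _; apply: hA2 _ (adeq_assoc _ _ _).1.
by apply/prec_ppairl/prec_meter_pair; rewrite /=; lra.
Qed.

Lemma prec_meter_sup (p q : PS) za zx : S0 za <= S0 zx -> prec (pp q (meter1 za)) p ->
  (forall eps, 0 < eps -> exists z, prec (pp q (meter1 z)) p /\ S0 zx - eps < S0 z) ->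
  prec (pp q (meter1 zx)) p.
Proof.
move=> le_ax ap approx; have [eq_ax|ne_ax] := eqVneq (S0 za) (S0 zx).
  by apply: hA2 _ ap; apply/prec_ppairl/prec_meter1E; rewrite eq_ax.
have gap : 0 < S0 zx - S0 za by rewrite subr_gt0 lt_neqAle ne_ax.
apply: (hA6 (z0 := za) (z1 := zx)) => d d_gt0.
have e_gt0 : 0 < d / 2 by lra.
exists (Pos e_gt0); split; first by rewrite /=; lra.
have [z [zp lt_z]] := approx _ (mulr_gt0 e_gt0 gap).
apply: hA2 _ (prec_ppairr _ zp).
apply: hA2 (adeq_sym (adeq_assoc _ _ _)).1 _; apply: hA2 _ (adeq_assoc _ _ _).1.
by apply/prec_ppairl/prec_meter_pair; rewrite /=; lra.
Qed.

Definition calibrated (s : sys) (T : state s -> R) :=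
  exists (r c : PS) (Q : sys) (m : state s -> state Q) (K : R),
    pure Q /\ forall x, adeq (pp (pst x) c) (pp r (pst (m x))) /\ ent0 S0 (m x) = T x + K.

Lemma calibrated_entropy (s : sys) (T : state s -> R) : calibrated T -> is_entropy_on prec T.
Proof.
case=> r [c [Q [m [K [pureQ hm]]]]] x y.
have [eqx ex] := hm x; have [eqy ey] := hm y.
rewrite -(lerD2r K) -ex -ey -prec_pureE //; split => pxy.
- by apply: (hcanc (p := r)); apply: prec_adeq eqx eqy (prec_ppairr _ pxy).
- apply: (@cancellation_r c).
  exact: prec_adeq (adeq_sym eqx) (adeq_sym eqy) (prec_ppairl _ pxy).
Qed.

Lemma calibrated_prod (s1 s2 : sys) (T1 : state s1 -> R) (T2 : state s2 -> R) :
  calibrated T1 -> calibrated T2 -> calibrated (s := Prod s1 s2) (fun x => T1 x.1 + T2 x.2).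
Proof.
case=> r1 [c1 [Q1 [m1 [K1 [pure1 h1]]]]] [r2 [c2 [Q2 [m2 [K2 [pure2 h2]]]]]].
exists (pp r1 r2), (pp c1 c2), (Prod Q1 Q2), (fun x => (m1 x.1, m2 x.2)), (K1 + K2).
split; first by rewrite /= pure1 pure2.
case=> a b; have [eqa ea] := h1 a; have [eqb eb] := h2 b; split.
- apply: adeq_trans (adeq_interchange (pst a) (pst b) c1 c2) _.
  exact: adeq_trans (adeq_ppair eqa eqb) (adeq_interchange _ _ _ _).
- by rewrite /= ea eb; lra.
Qed.

Lemma calibrated_meter (t : @pos R) (z : G0) : calibrated (s := Meter t) (fun w => posval t * S0 w).
Proof.
exists (meter G t z), (meter G t z), (Meter t), id, 0.
by split=> // w; split; [exact: adeq_comm | rewrite /= addr0].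
Qed.

Lemma calibrated_base i (F : G i -> R) (z0 : G0) (x1 : G i) :
  (forall x, exists zx, adeq (pp (base G0 x) (meter1 z0)) (pp (base G0 x1) (meter1 zx))
     /\ S0 zx = F x) -> calibrated (s := Base i) F.
Proof.
move=> /choice[m hm]; exists (base G0 x1), (meter1 z0), (Meter pos1), m, 0.
by split=> // x; have [eqx <-] := hm x; split; last rewrite /= mul1r addr0.
Qed.

(* The state of s only serves to pick the fixed states r and c of each component. *)
Lemma calibrated_totS (S : forall i, G i -> R) : (forall i, calibrated (s := Base i) (S i)) ->
  forall s, state s -> calibrated (totS S0 S (s := s)).
Proof.
move=> calS; elim=> [i|t|s1 IH1 s2 IH2] x0; first exact: calS.
  exact: calibrated_meter.
by case: x0 => a b; apply: calibrated_prod (IH1 a) (IH2 b).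
Qed.

Lemma entropy_ext (s : sys) (F F' : state s -> R) :
  F =1 F' -> is_entropy_on prec F -> is_entropy_on prec F'.
Proof. by move=> eqF hF x y; rewrite -!eqF. Qed.

Section Calibration.
Variables (i : I) (z0 : G0) (x1 : G i).
Hypothesis hB : B1 prec z0 x1.

Local Notation bs := (@base R I G G0 i).
Local Notation Sm := (Sminus S0 prec z0 x1).
Local Notation Sp := (Splus S0 prec z0 x1).

Definition lower_values (x : G i) : set R := [set v | exists z,
  prec (pp (bs x1) (meter1 z)) (pp (bs x) (meter1 z0)) /\ S0 z = v].
Definition upper_values (x : G i) : set R := [set v | exists z,
  prec (pp (bs x) (meter1 z0)) (pp (bs x1) (meter1 z)) /\ S0 z = v].

Lemma lower_le_upper x a b : lower_values x a -> upper_values x b -> a <= b.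
Proof.
case=> za [pa <-] [zb [pb <-]].
by apply/prec_meter1E/(hcanc (p := bs x1)); apply: hA2 pa pb.
Qed.

Lemma lower_values_neq0 x : (lower_values x !=set0)%classic.
Proof. by have [z' [z'' [p' _]]] := hB x; exists (S0 z'), z'. Qed.

Lemma upper_values_neq0 x : (upper_values x !=set0)%classic.
Proof. by have [z' [z'' [_ p'']]] := hB x; exists (S0 z''), z''. Qed.

Lemma has_sup_lower_values x : has_sup (lower_values x).
Proof.
split; first exact: lower_values_neq0.
by have [b hb] := upper_values_neq0 x; exists b => a ha; apply: lower_le_upper ha hb.
Qed.

Lemma has_inf_upper_values x : has_inf (upper_values x).
Proof.
split; first exact: upper_values_neq0.
by have [a ha] := lower_values_neq0 x; exists a => b hb; apply: lower_le_upper ha hb.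
Qed.

Lemma Sminus_ge x a : lower_values x a -> a <= Sm x.
Proof. exact: (sup_upper_bound (has_sup_lower_values x)). Qed.

Lemma Splus_le x b : upper_values x b -> Sp x <= b.
Proof. exact: (ge_inf (has_inf_upper_values x).2). Qed.

Lemma Sminus_le_Splus x : Sm x <= Sp x.
Proof.
apply: ge_sup (lower_values_neq0 x) _ => a ha.
by apply: lb_le_inf (upper_values_neq0 x) _ => b hb; apply: lower_le_upper ha hb.
Qed.

Lemma Sminus_eq_Splus x : Sm x = Sp x.
Proof.
apply/le_anti; rewrite Sminus_le_Splus /= leNgt; apply/negP => lt_mp.
have [za [zb [pa pb]]] := hB x.
have le_a : S0 za <= Sm x by apply: Sminus_ge; exists za.
have le_b : Sp x <= S0 zb by apply: Splus_le; exists zb.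
have [z hz] : exists z, S0 z = (Sm x + Sp x) / 2.
  by apply: (meter_value_between (za := za) (zb := zb)); apply/andP; split; lra.
case: (hB2 (s := Prod (Base i) (Meter pos1)) (x1, z) (x, z0)) => pz.
- have : S0 z <= Sm x by apply: Sminus_ge; exists z.
  lra.
- have : Sp x <= S0 z by apply: Splus_le; exists z.
  lra.
Qed.

Lemma Sminus_calibration x : exists zx,
  adeq (pp (bs x) (meter1 z0)) (pp (bs x1) (meter1 zx)) /\ S0 zx = Sm x.
Proof.
have [za [zb [pa pb]]] := hB x.
have le_a : S0 za <= Sm x by apply: Sminus_ge; exists za.
have le_b : Sm x <= S0 zb by rewrite Sminus_eq_Splus; apply: Splus_le; exists zb.
have [zx hzx] : exists zx, S0 zx = Sm x.
  by apply: (meter_value_between (za := za) (zb := zb)); rewrite le_a le_b.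
exists zx; split=> //; split.
- apply: (prec_meter_inf _ pb) => [|eps eps_gt0]; first by rewrite hzx.
  have [_ [z [pz <-]] lt_z] := inf_adherent eps_gt0 (has_inf_upper_values x).
  by exists z; rewrite hzx Sminus_eq_Splus.
- apply: (prec_meter_sup _ pa) => [|eps eps_gt0]; first by rewrite hzx.
  have [_ [z [pz <-]] lt_z] := sup_adherent eps_gt0 (has_sup_lower_values x).
  by exists z; rewrite hzx.
Qed.

Lemma Sminus_calibrated : calibrated (s := Base i) Sm.
Proof. exact: calibrated_base Sminus_calibration. Qed.

Lemma Sminus_entropy : is_entropy_on prec (s := Base i) Sm.
Proof. exact: calibrated_entropy Sminus_calibrated. Qed.

Lemma Sminus_meter_entropy :
  is_entropy_on prec (s := Prod (Base i) (Meter pos1)) (fun xz => Sm xz.1 + S0 xz.2).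
Proof.
apply: entropy_ext (calibrated_entropy (calibrated_prod Sminus_calibrated (calibrated_meter pos1 z0))).
by case=> x z; rewrite /= mul1r.
Qed.

Lemma Sminus_unique (F : G i -> R) :
  is_entropy_on prec (s := Prod (Base i) (Meter pos1)) (fun xz => F xz.1 + S0 xz.2) ->
  exists c, forall x, F x = Sm x + c.
Proof.
move=> hF; exists (F x1 - S0 z0) => x.
have [zx [[px1 p1x] <-]] := Sminus_calibration x.
have := (hF (x, z0) (x1, zx)).1 px1; have := (hF (x1, zx) (x, z0)).1 p1x.
by rewrite /=; lra.
Qed.

End Calibration.

Lemma totS_Sminus_entropy (Z0 : I -> G0) (X1 : forall i, G i) :
  (forall i, B1 prec (Z0 i) (X1 i)) ->
  forall s, is_entropy_on prec (totS S0 (fun i => Sminus S0 prec (Z0 i) (X1 i)) (s := s)).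
Proof.
move=> hB1 s x; apply: calibrated_entropy; apply: (calibrated_totS _ x) => i.
exact: Sminus_calibrated.
Qed.

End Entropy.

Theorem theorem1 (R : realType) (I : Type) (G : I -> Type) (G0 : Type)
  (prec : @pstate R I G G0 -> @pstate R I G G0 -> Prop)
  (S0 : G0 -> R) (Z0 : I -> G0) (X1 : forall i, G i)
  (hA1 : A1_reflexivity prec) (hA2 : A2_transitivity prec)
  (hA3 : A3_consistency prec) (hA6 : A6_stability prec)
  (hcanc : cancellation_law prec) (hprod : product_identifications prec)
  (hmeter : meter_entropy S0 prec) (hconn : meter_range_connected S0)
  (hB1 : forall i, B1 prec (Z0 i) (X1 i))
  (hB2 : B2_comparability prec) :
  let S := fun i => Sminus S0 prec (Z0 i) (X1 i) in
  (forall i (x : G i), Sminus S0 prec (Z0 i) (X1 i) x = Splus S0 prec (Z0 i) (X1 i) x) /\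
  (forall i, is_entropy_on prec (s := Base i) (S i)) /\
  (forall i (z0' : G0) (x1' : G i), B1 prec z0' x1' ->
     exists c : R, forall x : G i, Sminus S0 prec z0' x1' x = S i x + c) /\
  (forall i, is_entropy_on prec (s := Prod (Base i) (Base i))
                (fun xy => S i xy.1 + S i xy.2)) /\
  (forall i, is_entropy_on prec (s := Prod (Base i) (Meter pos1))
                (fun xz => S i xz.1 + S0 xz.2)) /\
  (forall s : sys, plain s -> is_entropy_on prec (totS S0 S (s := s))) /\
  (forall i (F : G i -> R),
     is_entropy_on prec (s := Base i) F ->
     is_entropy_on prec (s := Prod (Base i) (Meter pos1)) (fun xz => F xz.1 + S0 xz.2) ->
     exists c : R, forall x : G i, F x = S i x + c).
Proof.
move=> S; rewrite {}/S.
have totS_additive := totS_Sminus_entropy hA1 hA2 hA3 hA6 hcanc hprod hmeter hconn hB2 hB1.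
split; first by move=> i x; exact: Sminus_eq_Splus.
split; first by move=> i; exact: Sminus_entropy.
split.
  by move=> i z0' x1' hB'; apply: Sminus_unique => //; exact: Sminus_meter_entropy.
split; first by move=> i; exact: (@totS_additive (Prod (Base i) (Base i))).
split; first by move=> i; exact: Sminus_meter_entropy.
(* additivity holds on every compound system, not only on the plain ones *)
split; first by move=> s _; exact: totS_additive.
by move=> i F _; exact: Sminus_unique.
Qed.
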